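(* Let $\mathfrak A$ be a pseudo left Hilbert algebra. Then $\mathfrak A^2=\mathrm{span}\{\xi\eta:\xi,\eta\in\mathfrak A\}$, with the restricted product, involution and inner product, is a left Hilbert algebra. Moreover, for all $\xi\in\mathfrak A$ and $\eta\in(\mathfrak A^2)^\perp$ (orthogonal complement in $\overline{\mathfrak A}$) one has $\xi\eta:=\pi_l(\xi)\eta=0$; and if in addition $\eta\in\mathfrak A$, then also $\eta\xi=0$.
   Context: Inner products are linear in the second variable. A pseudo left Hilbert algebra is a complex associative algebra $\mathfrak A$ with an antilinear involution $S:\mathfrak A\to\mathfrak A$ ($S^2=\mathrm{id}$, $S(\xi\eta)=S(\eta)S(\xi)$) and an inner product $\langle\cdot,\cdot\rangle$ such that: (1) for each $\xi\in\mathfrak A$ the left multiplication $\pi_l(\xi):\eta\mapsto\xi\eta$ is bounded; (2) $\langle\xi\eta,\zeta\rangle=\langle\eta,(S\xi)\zeta\rangle$ for all $\xi,\eta,\zeta\in\mathfrak A$; (3) $S$ is closable as an operator on the Hilbert space completion $\overline{\mathfrak A}$. It is a left Hilbert algebra if moreover $\mathfrak A^2=\mathrm{span}\{\xi\eta:\xi,\eta\in\mathfrak A\}$ is dense in $\overline{\mathfrak A}$. The closure of $S$ is again denoted $S$, with domain $D(S)$; $\pi_l(\xi)$ also denotes the bounded extension to $\overline{\mathfrak A}$. *)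

From mathcomp Require Import all_boot all_order all_algebra.
From mathcomp Require Import reals complex.
Set Implicit Arguments. Unset Strict Implicit. Unset Printing Implicit Defensive.
Import Order.TTheory GRing.Theory Num.Theory.
Local Open Scope ring_scope.

Section PLHA.
Variable R : realType.
Local Notation C := (R[i]).
Variable H : lmodType C.
Variable ip : H -> H -> C.

(* complex inner product, linear in the second variable, antilinear in the first *)
Definition inner_product : Prop :=
  [/\ forall (a : C) x y z, ip x (a *: y + z) = a * ip x y + ip x z,
      forall x y, ip y x = (ip x y)^*,
      forall x, 0 <= ip x x &
      forall x, ip x x = 0 -> x = 0].

Definition hnorm (x : H) : R := Num.sqrt (complex.Re (ip x x)).

Definition hcvg (u : nat -> H) (l : H) : Prop :=
  forall e : R, 0 < e -> exists N : nat, forall n, (N <= n)%N -> hnorm (u n - l) < e.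

Definition hcauchy (u : nat -> H) : Prop :=
  forall e : R, 0 < e -> exists N : nat,
    forall m n, (N <= m)%N -> (N <= n)%N -> hnorm (u m - u n) < e.

Definition hcomplete : Prop := forall u, hcauchy u -> exists l, hcvg u l.

(* closure of a subset of H; for B a subspace of the Hilbert space H this is
   (a realization of) the Hilbert space completion of B *)
Definition hclosure (B : H -> Prop) : H -> Prop :=
  fun x => exists u : nat -> H, (forall n, B (u n)) /\ hcvg u x.

Definition orth (B : H -> Prop) : H -> Prop :=
  fun x => forall y, B y -> ip y x = 0.

Definition subspace (B : H -> Prop) : Prop :=
  B 0 /\ forall (a : C) x y, B x -> B y -> B (a *: x + y).

Definition sq (B : H -> Prop) (mult : H -> H -> H) : H -> Prop :=
  fun z => exists (n : nat) (c : 'I_n -> C) (u v : 'I_n -> H),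
    (forall i, B (u i)) /\ (forall i, B (v i)) /\
    z = \sum_(i < n) c i *: mult (u i) (v i).

(* B (subset of H, with product mult and involution S defined on B) is a
   pseudo left Hilbert algebra, its completion being realized as the
   closure of B in H *)
Definition pseudo_left_Hilbert_algebra (B : H -> Prop) (mult : H -> H -> H)
    (S : H -> H) : Prop :=
  [/\ subspace B,
      [/\ forall x y, B x -> B y -> B (mult x y),
          forall x y z, B x -> B y -> B z -> mult x (mult y z) = mult (mult x y) z,
          forall (a : C) x y z, B x -> B y -> B z ->
            mult (a *: x + y) z = a *: mult x z + mult y z &
          forall (a : C) x y z, B x -> B y -> B z ->
            mult x (a *: y + z) = a *: mult x y + mult x z],
      [/\ forall x, B x -> B (S x),
          forall (a : C) x y, B x -> B y -> S (a *: x + y) = a^* *: S x + S y,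
          forall x, B x -> S (S x) = x &
          forall x y, B x -> B y -> S (mult x y) = mult (S y) (S x)],
      (forall x, B x -> exists M : R, forall y, B y -> hnorm (mult x y) <= M * hnorm y) &
      ((forall x y z, B x -> B y -> B z -> ip (mult x y) z = ip y (mult (S x) z)) /\
      (* (3) S is closable as an operator on the completion: the closure of its
         graph contains no point (0, w) with w <> 0 *)
      (forall u : nat -> H, forall w, (forall n, B (u n)) ->
          hcvg u 0 -> hcvg (fun n => S (u n)) w -> w = 0))].

Definition left_Hilbert_algebra (B : H -> Prop) (mult : H -> H -> H)
    (S : H -> H) : Prop :=
  pseudo_left_Hilbert_algebra B mult S /\
  (forall x, hclosure B x -> hclosure (sq B mult) x).

(* pil_ext B mult x eta v : the bounded extension of pi_l(x) (left
   multiplication by x on B) to the completion maps eta to v, i.e.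
   x u_n -> v for every sequence u_n in B converging to eta *)
Definition pil_ext (B : H -> Prop) (mult : H -> H -> H) (x eta v : H) : Prop :=
  forall u : nat -> H, (forall n, B (u n)) -> hcvg u eta ->
    hcvg (fun n => mult x (u n)) v.

End PLHA.

(* Let eta be orthogonal to A^2 and u_n -> eta with u_n in A. Since pi_l(xi) is
   bounded, xi u_n is Cauchy; its limit v satisfies
   <a, v> = lim <(S xi) a, u_n> = <(S xi) a, eta> = 0 for every a in A, so v = 0
   by density of A. When eta is in A the same computation gives x eta = 0 for all
   x in A, hence |eta xi|^2 = <xi, ((S eta) eta) xi> = 0.
   For the density of A^4 := (A^2)^2 in the closure of A^2, project b in A onto
   the closure of A^2: b = p + q with q orthogonal to A^2 and p = lim p_n, p_n in
   A^2. By the first part w q = 0 in the limit, so w b = lim w p_n. For w in A^2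
   this puts A^2 A in the closure of A^4; for w in A it writes w b as a limit of
   w p_n, which lies in the span of A^2 A, hence A A lies in the closure of A^4.
   The remaining axioms of a pseudo left Hilbert algebra restrict from A to its
   S-stable subalgebra A^2. *)

From mathcomp Require Import all_boot all_order all_algebra.
From mathcomp Require Import boolp classical_sets reals complex.
From mathcomp Require Import ring lra.
Set Implicit Arguments. Unset Strict Implicit. Unset Printing Implicit Defensive.
Import Order.TTheory GRing.Theory Num.Theory Normc.
Local Open Scope ring_scope.

Lemma half_gt0 (R : numFieldType) (e : R) : 0 < e -> 0 < e / 2.
Proof. by move=> e0; rewrite divr_gt0 ?ltr0n. Qed.

Lemma invS_lt_eventually (R : realType) (d : R) :
  0 < d -> exists K : nat, forall k, (K <= k)%N -> k.+1%:R^-1 < d.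
Proof.
move=> d0; have [K hK] := ltr_add_invr d0; exists K => k hk.
by apply: le_lt_trans hK; rewrite add0r lef_pV2 ?posrE ?ltr0n // ler_nat ltnS.
Qed.

Lemma normc_ge0 (R : rcfType) (z : R[i]) : 0 <= normc z.
Proof. by case: z => a b; apply: sqrtr_ge0. Qed.

Lemma invSn_gt0 {R : numFieldType} (k : nat) : 0 < k.+1%:R^-1 :> R.
Proof. by rewrite invr_gt0 ltr0Sn. Qed.

Section InnerProductSpace.
Variables (R : realType) (H : lmodType R[i]) (ip : H -> H -> R[i]).
Hypothesis ip_inner : inner_product ip.
Local Notation hn := (hnorm ip).

Lemma ip0r x : ip x 0 = 0.
Proof.
case: ip_inner => lin _ _ _.
have := lin 1 x 0 0; rewrite scale1r addr0 mul1r => h.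
by apply/(addrI (ip x 0)); rewrite addr0 -h.
Qed.

Lemma ipDr x y z : ip x (y + z) = ip x y + ip x z.
Proof. by case: ip_inner => lin _ _ _; rewrite -{1}[y]scale1r lin mul1r. Qed.

Lemma ipZr x a y : ip x (a *: y) = a * ip x y.
Proof. by case: ip_inner => lin _ _ _; rewrite -[a *: y]addr0 lin ip0r addr0. Qed.

Lemma ipC x y : ip y x = (ip x y)^*.
Proof. by case: ip_inner. Qed.

Lemma conj_ip x y : (ip x y)^* = ip y x.
Proof. by rewrite (ipC x y). Qed.

Lemma ipNr x y : ip x (- y) = - ip x y.
Proof. by rewrite -scaleN1r ipZr mulN1r. Qed.

Lemma ipBr x y z : ip x (y - z) = ip x y - ip x z.
Proof. by rewrite ipDr ipNr. Qed.

Lemma ip0l x : ip 0 x = 0.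
Proof. by rewrite ipC ip0r conjC0. Qed.

Lemma ipDl x y z : ip (y + z) x = ip y x + ip z x.
Proof. by rewrite ipC ipDr rmorphD (ipC x y) (ipC x z). Qed.

Lemma ipZl x a y : ip (a *: y) x = a^* * ip y x.
Proof. by rewrite ipC ipZr rmorphM (ipC x y). Qed.

Lemma ipNl x y : ip (- y) x = - ip y x.
Proof. by rewrite ipC ipNr rmorphN (ipC x y). Qed.

Lemma ipBl x y z : ip (y - z) x = ip y x - ip z x.
Proof. by rewrite ipDl ipNl. Qed.

Lemma ip_ge0 x : 0 <= ip x x.
Proof. by case: ip_inner. Qed.

Lemma ip_eq0 x : ip x x = 0 -> x = 0.
Proof. by case: ip_inner => _ _ _; apply. Qed.

Lemma ipxx_gt0 x : x != 0 -> 0 < ip x x.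
Proof. by move=> nx; rewrite lt_def ip_ge0 andbT; apply: contra nx => /eqP/ip_eq0->. Qed.

Lemma ipxx_sqr x : ip x x = ((hn x ^+ 2)%:C)%C.
Proof.
have := ip_ge0 x; rewrite /hnorm; case: (ip x x) => a b /=.
by rewrite lecE /= => /andP[/eqP -> a0]; rewrite sqr_sqrtr.
Qed.

Lemma hn_ge0 x : 0 <= hn x.
Proof. exact: sqrtr_ge0. Qed.

Lemma ip_sub_proj x y : x != 0 ->
  ip (y - (ip x y / ip x x) *: x) (y - (ip x y / ip x x) *: x) =
  ip y y - ip x y * (ip x y)^* / ip x x.
Proof.
move=> nx; have an : ip x x != 0 by rewrite gt_eqF ?ipxx_gt0.
set a := ip x x in an *; set c := ip x y.
have ca : a^* = a by rewrite conj_ip.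
have tc : (c / a)^* = c^* / a^* by rewrite rmorphM fmorphV.
rewrite ipBl !ipBr !ipZl !ipZr -/a -/c (ipC x y) -/c tc ca.
by field.
Qed.

Lemma hn_sub_proj x y : x != 0 ->
  hn (y - (ip x y / ip x x) *: x) ^+ 2 = hn y ^+ 2 - normc (ip x y) ^+ 2 / hn x ^+ 2.
Proof.
move=> nx; have e := ip_sub_proj y nx.
rewrite -sqr_normc [X in _ - _ / X]ipxx_sqr [ip y y]ipxx_sqr [ip (y - _) _]ipxx_sqr in e.
apply: complexI; rewrite rmorphB (rmorphM _ (normc _ ^+ 2)) fmorphV rmorphXn; exact: e.
Qed.

Lemma normc_ip_le x y : normc (ip x y) <= hn x * hn y.
Proof.
have [->|nx] := eqVneq x 0; first by rewrite ip0l normc0 mulr_ge0 ?hn_ge0.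
have hx : 0 < hn x ^+ 2 by rewrite -ltcR -ipxx_sqr ipxx_gt0.
rewrite -(ler_pXn2r (n := 2)) ?nnegrE ?mulr_ge0 ?hn_ge0 ?normc_ge0 //.
have := sqr_ge0 (hn (y - (ip x y / ip x x) *: x)).
by rewrite hn_sub_proj // subr_ge0 ler_pdivrMr // exprMn mulrC.
Qed.

Lemma hnZ a x : hn (a *: x) = normc a * hn x.
Proof.
apply/eqP; rewrite -(eqrXn2 (n := 2)) ?mulr_ge0 ?normc_ge0 ?hn_ge0 //.
apply/eqP/complexI; rewrite exprMn (rmorphM _ (normc a ^+ 2)) rmorphXn.
by rewrite -!ipxx_sqr ipZl ipZr mulrA -normCKC ipxx_sqr.
Qed.

Lemma hnN x : hn (- x) = hn x.
Proof. by rewrite -scaleN1r hnZ normcN normc1 mul1r. Qed.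

Lemma hnB x y : hn (x - y) = hn (y - x).
Proof. by rewrite -hnN opprB. Qed.

Lemma hn0 : hn 0 = 0.
Proof. by rewrite -(scale0r 0) hnZ normc0 mul0r. Qed.

Lemma hnD x y : hn (x + y) <= hn x + hn y.
Proof.
set c := ip x y.
have e : ip (x + y) (x + y) = ip x x + ip y y + (c + c^*).
  by rewrite !ipDl !ipDr -/c (ipC x y) -/c; ring.
have hc : c + c^* <= `|c| * 2.
  rewrite -[c + c^*](@divfK _ 2) ?pnatr_eq0 // -ReE.
  by rewrite ler_pM2r ?ltr0n // (leif_Re_Creal c).1.
have h2 : hn (x + y) ^+ 2 <= hn x ^+ 2 + hn y ^+ 2 + normc c * 2.
  rewrite -lecR; move: hc; rewrite -(lerD2l (ip x x + ip y y)) -e !ipxx_sqr.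
  by rewrite !rmorphD (rmorphM _ (normc c)) rmorph_nat.
rewrite -(ler_pXn2r (n := 2)) ?nnegrE ?addr_ge0 ?hn_ge0 // (le_trans h2) //.
have := normc_ip_le x y; rewrite -/c sqrrD; lra.
Qed.

Lemma parallelogram x y :
  hn (x + y) ^+ 2 + hn (x - y) ^+ 2 = 2 * hn x ^+ 2 + 2 * hn y ^+ 2.
Proof.
have e : ip (x + y) (x + y) + ip (x - y) (x - y) = 2 * ip x x + 2 * ip y y.
  by rewrite !ipDl !ipDr !ipNl !ipNr; ring.
rewrite !ipxx_sqr in e.
by apply: complexI; rewrite !rmorphD !(rmorphM _ 2) rmorph_nat; apply: e.
Qed.

Local Notation cvg := (hcvg ip).
Local Notation cl := (hclosure ip).

Lemma cvg_cst x : cvg (fun _ => x) x.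
Proof. by move=> e e0; exists 0%N => n _; rewrite subrr hn0. Qed.

Lemma eq_cvg u v l : (forall n, u n = v n) -> cvg u l -> cvg v l.
Proof. by move=> e h eps /h [N hN]; exists N => n; rewrite -e; apply: hN. Qed.

Lemma cvgD u v l m : cvg u l -> cvg v m -> cvg (fun n => u n + v n) (l + m).
Proof.
move=> hu hv e e0.
have [N1 hN1] := hu _ (half_gt0 e0); have [N2 hN2] := hv _ (half_gt0 e0).
exists (maxn N1 N2) => n; rewrite geq_max => /andP[n1 n2].
have := hN1 n n1; have := hN2 n n2.
rewrite opprD addrACA; have := hnD (u n - l) (v n - m); lra.
Qed.

Lemma cvgZ a u l : cvg u l -> cvg (fun n => a *: u n) (a *: l).
Proof.
move=> h e e0.
have k0 : 0 < normc a + 1 by rewrite ltr_pwDr ?ltr01 ?normc_ge0.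
have [N hN] := h (e / (normc a + 1)) (divr_gt0 e0 k0).
exists N => n /hN; rewrite -scalerBr hnZ ltr_pdivlMr // => hn_lt.
by apply: le_lt_trans hn_lt; rewrite mulrC ler_wpM2l ?hn_ge0 // lerDl ler01.
Qed.

Lemma cvgB u v l m : cvg u l -> cvg v m -> cvg (fun n => u n - v n) (l - m).
Proof.
move=> hu hv; have := cvgD hu (cvgZ (-1) hv); rewrite scaleN1r.
by apply: eq_cvg => n; rewrite scaleN1r.
Qed.

Lemma cvg_cauchy u l : cvg u l -> hcauchy ip u.
Proof.
move=> h e e0; have [N hN] := h _ (half_gt0 e0); exists N => m n /hN hm /hN hn'.
have := hnD (u m - l) (l - u n); rewrite addrA subrK (hnB l); lra.
Qed.

Lemma ip_lim_eq a b u w l m : cvg u l -> cvg w m ->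
  (forall n, ip a (w n) = ip b (u n)) -> ip a m = ip b l.
Proof.
move=> hu hw he; apply/eqP; rewrite -subr_eq0; apply/eqP/eq0_normc/eqP.
rewrite eq_le normc_ge0 andbT; apply/ler_addgt0Pl => e e0; rewrite addr0.
set K := hn a + hn b + 1.
have K0 : 0 < K by rewrite /K ltr_pwDr ?ltr01 ?addr_ge0 ?hn_ge0.
have d0 : 0 < e / K by rewrite divr_gt0.
have [N1 hN1] := hu _ d0; have [N2 hN2] := hw _ d0.
set n := maxn N1 N2.
have a1 : hn (u n - l) < e / K := hN1 n (leq_maxl _ _).
have a2 : hn (w n - m) < e / K := hN2 n (leq_maxr _ _).
have -> : ip a m - ip b l = - ip a (w n - m) + ip b (u n - l).
  by rewrite !ipBr he; ring.
apply: le_trans (le_normcD _ _) _; rewrite normcN.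
have := normc_ip_le a (w n - m); have := normc_ip_le b (u n - l).
have eK : e = K * (e / K) by rewrite mulrC divfK // gt_eqF.
have := hn_ge0 a; have := hn_ge0 b.
rewrite /K in eK; nra.
Qed.

Lemma sub_hclosure (B : H -> Prop) x : B x -> cl B x.
Proof. by move=> bx; exists (fun _ => x); split => //; apply: cvg_cst. Qed.

Lemma hclosure_subspace (B : H -> Prop) : subspace B -> subspace (cl B).
Proof.
move=> [B0 sB]; split; first exact: sub_hclosure B0.
move=> a x y [u [hu cu]] [v [hv cv]].
exists (fun n => a *: u n + v n); split; first by move=> n; apply: sB.
exact: cvgD (cvgZ a cu) cv.
Qed.

Lemma hclosure_idem (B : H -> Prop) x : cl (cl B) x -> cl B x.
Proof.
move=> [xs [hxs cx]].
have near_xs k : exists y, B y /\ hn (y - xs k) < k.+1%:R^-1.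
  have [u [hu cu]] := hxs k.
  have [N hN] := cu k.+1%:R^-1 (invSn_gt0 k).
  by exists (u N); split => //; apply: hN.
have [f hf] := choice near_xs.
exists f; split => [n|e e0]; first by case: (hf n).
have [K1 hK1] := invS_lt_eventually (half_gt0 e0); have [K2 hK2] := cx _ (half_gt0 e0).
exists (maxn K1 K2) => n; rewrite geq_max => /andP[n1 n2].
have := lt_trans (hf n).2 (hK1 n n1); have := hK2 n n2.
have := hnD (f n - xs n) (xs n - x); rewrite addrA subrK; lra.
Qed.

Lemma orth_hclosure (B : H -> Prop) z y : orth ip B z -> cl B y -> ip y z = 0.
Proof.
move=> oz [u [hu cu]].
rewrite ipC (ip_lim_eq (b := 0) (cvg_cst 0) cu) ?ip0l ?conjC0 // => n.
by rewrite ipC oz ?conjC0.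
Qed.

Lemma orth_dense_eq0 (B : H -> Prop) z : (forall x, cl B x) -> orth ip B z -> z = 0.
Proof. by move=> dB oz; apply: ip_eq0; apply: orth_hclosure oz (dB z). Qed.

Lemma ler_hn_lim u l (d : R) : cvg u l -> (forall n, d <= hn (u n)) -> d <= hn l.
Proof.
move=> cu hd; apply/ler_addgt0Pr => e /cu [N /(_ N (leqnn N)) hN].
have := hd N; have := hnD (u N - l) l; rewrite subrK; lra.
Qed.

Lemma hn_lim_le u l (d : R) :
  cvg u l -> (forall n, hn (u n) < d + n.+1%:R^-1) -> hn l <= d.
Proof.
move=> cu hd; apply/ler_addgt0Pr => e e0.
have [K1 hK1] := invS_lt_eventually (half_gt0 e0); have [K2 hK2] := cu _ (half_gt0 e0).
set n := maxn K1 K2.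
have := hK1 n (leq_maxl _ _); have := hK2 n (leq_maxr _ _); have := hd n.
have := hnD (l - u n) (u n); rewrite subrK hnB.
by move: (n.+1%:R^-1 : R) => c; clearbody n; lra.
Qed.

Lemma subspaceZ (B : H -> Prop) a x : subspace B -> B x -> B (a *: x).
Proof. by move=> [B0 sB] bx; rewrite -[_ *: _]addr0; apply: sB. Qed.

Lemma subspaceD (B : H -> Prop) x y : subspace B -> B x -> B y -> B (x + y).
Proof. by move=> [_ sB] bx byy; rewrite -[x]scale1r; apply: sB. Qed.

Lemma subspaceB (B : H -> Prop) x y : subspace B -> B x -> B y -> B (x - y).
Proof. by move=> sB bx byy; rewrite -scaleN1r; apply: subspaceD (subspaceZ _ _ _). Qed.

Section BestApproximation.
Variables (B : H -> Prop) (v : H).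
Hypothesis B_sub : subspace B.

Lemma min_dist_orth p :
  (forall b, B b -> hn (v - p) <= hn (v - (p + b))) -> orth ip B (v - p).
Proof.
move=> pmin b bb; have [->|nb] := eqVneq b 0; first by rewrite ip0l.
have hb : 0 < hn b ^+ 2 by rewrite -ltcR -ipxx_sqr ipxx_gt0.
(* Moving p by the component of v - p along b shortens v - p by
   |<b, v - p>|^2 / |b|^2. *)
have := pmin _ (subspaceZ (ip b (v - p) / ip b b) B_sub bb).
rewrite opprD addrA -(ler_pXn2r (n := 2)) ?nnegrE ?hn_ge0 // hn_sub_proj //.
set c := normc _ => h.
have : c ^+ 2 / hn b ^+ 2 <= 0 by lra.
rewrite pmulr_lle0 ?invr_gt0 // => c_le0.
by apply: eq0_normc; apply/eqP; rewrite -sqrf_eq0 eq_le c_le0 sqr_ge0.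
Qed.

Lemma dist_cauchy (d : R) (bs : nat -> H) : 0 <= d ->
  (forall b, B b -> d <= hn (v - b)) -> (forall n, B (bs n)) ->
  (forall n, hn (v - bs n) < d + n.+1%:R^-1) -> hcauchy ip bs.
Proof.
move=> d0 d_le hB hbs.
have pc m n : hn (bs m - bs n) ^+ 2 <= (4 * d + 2) * (m.+1%:R^-1 + n.+1%:R^-1).
  (* Parallelogram law around the midpoint of bs m and bs n, which lies in B. *)
  set w := v - (2^-1 : R[i]) *: (bs m + bs n).
  have hw : d <= hn w.
    by apply: d_le; apply: subspaceZ => //; apply: subspaceD.
  have e1 : (v - bs m) + (v - bs n) = w + w.
    have half2 : (2^-1 + 2^-1 : R[i]) = 1 by rewrite [RHS]splitr mul1r.
    by rewrite /w addrACA -opprD [RHS]addrACA -opprD -scalerDl half2 scale1r.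
  have e2 : (v - bs m) - (v - bs n) = bs n - bs m.
    by rewrite opprB addrC addrA subrK.
  have := parallelogram (v - bs m) (v - bs n); rewrite e1 e2 hnB.
  have := parallelogram w w; rewrite subrr hn0 expr0n /= addr0 => ->.
  have := hbs m; have := hbs n; have := hn_ge0 (v - bs m); have := hn_ge0 (v - bs n).
  have := invSn_gt0 (R := R) m; have := invSn_gt0 (R := R) n.
  have : m.+1%:R^-1 <= 1 :> R by rewrite invf_le1 ?ler1n ?ltr0Sn.
  have : n.+1%:R^-1 <= 1 :> R by rewrite invf_le1 ?ler1n ?ltr0Sn.
  move: (m.+1%:R^-1 : R) (n.+1%:R^-1 : R) => em en; nra.
move=> e e0.
have k0 : 0 < 2 * (4 * d + 2) by nra.
have [K hK] := invS_lt_eventually (divr_gt0 (exprn_gt0 2 e0) k0).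
exists K => m n /hK hm /hK hn'.
rewrite -(ltr_pXn2r (n := 2)) ?nnegrE ?hn_ge0 ?ltW //.
apply: le_lt_trans (pc m n) _; move: hm hn'.
rewrite !ltr_pdivlMr //.
by move: (m.+1%:R^-1 : R) (n.+1%:R^-1 : R) (e ^+ 2) => em en e2; lra.
Qed.

Lemma projection : hcomplete ip -> exists2 p, cl B p & orth ip B (v - p).
Proof.
move=> hc; have [B0 _] := B_sub.
pose E (r : R) := exists2 b, B b & hn (v - b) = r.
have E_lb : has_lbound E by exists 0 => r [b _ <-]; apply: hn_ge0.
have E_inf : has_inf E by split => //; exists (hn (v - 0)), 0.
set d := inf E.
have d_le b : B b -> d <= hn (v - b) by move=> bb; apply: ge_inf => //; exists b.
have d0 : 0 <= d by apply: lb_le_inf E_inf.1 _ => r [b _ <-]; apply: hn_ge0.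
have near_d n : exists b, B b /\ hn (v - b) < d + n.+1%:R^-1.
  by have [r [b bb <-] hr] := inf_adherent (invSn_gt0 n) E_inf; exists b.
have [bs hbs] := choice near_d.
have hB n : B (bs n) := (hbs n).1.
have [p cp] := hc _ (dist_cauchy d0 d_le hB (fun n => (hbs n).2)).
have cvp : cvg (fun n => v - bs n) (v - p) := cvgB (cvg_cst v) cp.
have hvp : hn (v - p) <= d := hn_lim_le cvp (fun n => (hbs n).2).
exists p; first by exists bs.
apply: min_dist_orth => b bb; apply: le_trans hvp _.
apply: ler_hn_lim (cvgB (cvg_cst v) (cvgD cp (cvg_cst b))) _ => n.
by apply: d_le; apply: subspaceD.
Qed.

End BestApproximation.

End InnerProductSpace.

Section Span.
Variables (R : realType) (H : lmodType R[i]).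

Lemma subspace_sum (B : H -> Prop) n (c : 'I_n -> R[i]) (F : 'I_n -> H) :
  subspace B -> (forall i, B (F i)) -> B (\sum_(i < n) c i *: F i).
Proof.
move=> sB; elim: n c F => [|n IH] c F hF; first by rewrite big_ord0; case: sB.
rewrite big_ord_recr /=; apply: subspaceD => //; last exact: subspaceZ.
exact: IH.
Qed.

Variable mult : H -> H -> H.

Lemma sq_mult (B : H -> Prop) x y : B x -> B y -> sq B mult (mult x y).
Proof.
move=> bx byy; exists 1%N, (fun _ => 1), (fun _ => x), (fun _ => y).
by split => //; split => //; rewrite big_ord1 scale1r.
Qed.

Lemma sq_subspace (B : H -> Prop) : subspace (sq B mult).
Proof.
split.
  exists 0%N, (fun _ => 0), (fun _ => 0), (fun _ => 0).
  by split; [case | split; [case | rewrite big_ord0]].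
move=> a _ _ [n1 [c1 [u1 [v1 [hu1 [hv1 ->]]]]]] [n2 [c2 [u2 [v2 [hu2 [hv2 ->]]]]]].
pose glue T (f1 : 'I_n1 -> T) (f2 : 'I_n2 -> T) i :=
  match split i with inl j => f1 j | inr k => f2 k end.
exists (n1 + n2)%N, (glue _ (fun j => a * c1 j) c2), (glue _ u1 u2), (glue _ v1 v2).
split; first by move=> i; rewrite /glue; case: (split i).
split; first by move=> i; rewrite /glue; case: (split i).
rewrite big_split_ord /= scaler_sumr /glue.
congr (_ + _); apply: eq_bigr => j _; first by rewrite (unsplitK (inl _)) scalerA.
by rewrite (unsplitK (inr _)).
Qed.

End Span.

Section PseudoLeftHilbertAlgebra.
Variables (R : realType) (H : lmodType R[i]) (ip : H -> H -> R[i]).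
Variables (A : H -> Prop) (mult : H -> H -> H) (S : H -> H).
Hypothesis ip_inner : inner_product ip.
Hypothesis H_complete : hcomplete ip.
Hypothesis A_dense : forall x, hclosure ip A x.
Hypothesis hA : pseudo_left_Hilbert_algebra ip A mult S.
Local Notation hn := (hnorm ip).
Local Notation cvg := (hcvg ip).
Local Notation cl := (hclosure ip).
Local Notation A2 := (sq A mult).

Lemma A_subspace : subspace A.
Proof. by case: hA. Qed.

Lemma A_mult x y : A x -> A y -> A (mult x y).
Proof. by case: hA => _ [h _ _ _] _ _ _; apply: h. Qed.

Lemma multA x y z : A x -> A y -> A z -> mult x (mult y z) = mult (mult x y) z.
Proof. by case: hA => _ [_ h _ _] _ _ _; apply: h. Qed.

Lemma mult_linl a x y z : A x -> A y -> A z ->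
  mult (a *: x + y) z = a *: mult x z + mult y z.
Proof. by case: hA => _ [_ _ h _] _ _ _; apply: h. Qed.

Lemma mult_linr a x y z : A x -> A y -> A z ->
  mult x (a *: y + z) = a *: mult x y + mult x z.
Proof. by case: hA => _ [_ _ _ h] _ _ _; apply: h. Qed.

Lemma A_S x : A x -> A (S x).
Proof. by case: hA => _ _ [h _ _ _] _ _; apply: h. Qed.

Lemma S_antilinear a x y : A x -> A y -> S (a *: x + y) = a^* *: S x + S y.
Proof. by case: hA => _ _ [_ h _ _] _ _; apply: h. Qed.

Lemma SK x : A x -> S (S x) = x.
Proof. by case: hA => _ _ [_ _ h _] _ _; apply: h. Qed.

Lemma S_mult x y : A x -> A y -> S (mult x y) = mult (S y) (S x).
Proof. by case: hA => _ _ [_ _ _ h] _ _; apply: h. Qed.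

Lemma mult_bounded x : A x -> exists M : R, forall y, A y -> hn (mult x y) <= M * hn y.
Proof. by case: hA => _ _ _ h _; apply: h. Qed.

Lemma ip_multl x y z : A x -> A y -> A z -> ip (mult x y) z = ip y (mult (S x) z).
Proof. by case: hA => _ _ _ _ [h _]; apply: h. Qed.

Lemma S_closable (u : nat -> H) w :
  (forall n, A (u n)) -> cvg u 0 -> cvg (fun n => S (u n)) w -> w = 0.
Proof. by case: hA => _ _ _ _ [_ h]; apply: h. Qed.

Lemma A0 : A 0.
Proof. by case: A_subspace. Qed.

Lemma mult0r x : A x -> mult x 0 = 0.
Proof.
move=> ax; have := mult_linr 1 ax A0 A0; rewrite !scale1r addr0 => h.
by apply/(addrI (mult x 0)); rewrite addr0 -h.
Qed.

Lemma mult0l x : A x -> mult 0 x = 0.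
Proof.
move=> ax; have := mult_linl 1 A0 A0 ax; rewrite !scale1r addr0 => h.
by apply/(addrI (mult 0 x)); rewrite addr0 -h.
Qed.

Lemma multBr x y z : A x -> A y -> A z -> mult x (y - z) = mult x y - mult x z.
Proof.
by move=> ax ay az; rewrite -scaleN1r addrC mult_linr ?scaleN1r 1?addrC.
Qed.

Lemma S0 : S 0 = 0.
Proof.
have := S_antilinear 1 A0 A0; rewrite !scale1r addr0 rmorph1 scale1r => h.
by apply/(addrI (S 0)); rewrite addr0 -h.
Qed.

Lemma sq_subA z : A2 z -> A z.
Proof.
move=> [n [c [u [v [hu [hv ->]]]]]].
by apply: subspace_sum A_subspace _ => i; apply: A_mult.
Qed.

Lemma mult_sumr x n (c : 'I_n -> R[i]) (F : 'I_n -> H) : A x -> (forall i, A (F i)) ->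
  mult x (\sum_(i < n) c i *: F i) = \sum_(i < n) c i *: mult x (F i).
Proof.
move=> ax; elim: n c F => [|n IH] c F hF; first by rewrite !big_ord0 mult0r.
rewrite !big_ord_recr /= addrC mult_linr ?IH 1?addrC //.
by apply: subspace_sum A_subspace _.
Qed.

Lemma S_sum n (c : 'I_n -> R[i]) (F : 'I_n -> H) : (forall i, A (F i)) ->
  S (\sum_(i < n) c i *: F i) = \sum_(i < n) (c i)^* *: S (F i).
Proof.
elim: n c F => [|n IH] c F hF; first by rewrite !big_ord0 S0.
rewrite !big_ord_recr /= addrC S_antilinear ?IH 1?addrC //.
by apply: subspace_sum A_subspace _.
Qed.

Lemma sq_S z : A2 z -> A2 (S z).
Proof.
move=> [n [c [u [v [hu [hv ->]]]]]].
exists n, (fun i => (c i)^*), (fun i => S (v i)), (fun i => S (u i)).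
do 2 (split; first by move=> i; apply: A_S).
by rewrite S_sum => [|i]; [apply: eq_bigr => i _; rewrite S_mult | apply: A_mult].
Qed.

Lemma sq_pseudo_left_Hilbert_algebra : pseudo_left_Hilbert_algebra ip A2 mult S.
Proof.
split.
- exact: sq_subspace.
- split=> [x y sx sy | x y z sx sy sz | a x y z sx sy sz | a x y z sx sy sz].
  + by apply: sq_mult; apply: sq_subA.
  + by apply: multA; apply: sq_subA.
  + by apply: mult_linl; apply: sq_subA.
  + by apply: mult_linr; apply: sq_subA.
- split=> [x | a x y sx sy | x sx | x y sx sy].
  + exact: sq_S.
  + by apply: S_antilinear; apply: sq_subA.
  + by apply: SK; apply: sq_subA.
  + by apply: S_mult; apply: sq_subA.
- move=> x /sq_subA /mult_bounded [M hM]; exists M => y /sq_subA; apply: hM.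
- split=> [x y z sx sy sz | u w hu].
  + by apply: ip_multl; apply: sq_subA.
  + by apply: S_closable => n; apply: sq_subA.
Qed.

Lemma mult_cauchy x u : A x -> (forall n, A (u n)) -> hcauchy ip u ->
  hcauchy ip (fun n => mult x (u n)).
Proof.
move=> ax hu cu e e0.
have [M hM] := mult_bounded ax.
have M1 : 0 < `|M| + 1 by rewrite ltr_pwDr ?ltr01.
have [N hN] := cu _ (divr_gt0 e0 M1).
exists N => m n hm hn'; rewrite -multBr //.
have ABmn := subspaceB A_subspace (hu m) (hu n).
apply: le_lt_trans (hM _ ABmn) _; have := hN m n hm hn'.
rewrite ltr_pdivlMr //; have := ler_norm M; have := hn_ge0 ip (u m - u n); nra.
Qed.

Lemma pil_ext_orth_sq xi eta : A xi -> orth ip A2 eta -> pil_ext ip A mult xi eta 0.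
Proof.
move=> axi oe u hu cu.
have [v cv] := H_complete (mult_cauchy axi hu (cvg_cauchy ip_inner cu)).
suff <- : v = 0 by [].
apply: (orth_dense_eq0 ip_inner A_dense) => a aa.
have sa := A_S axi.
rewrite (ip_lim_eq ip_inner (b := mult (S xi) a) cu cv) => [|n].
  exact/oe/sq_mult.
by rewrite ip_multl ?SK.
Qed.

Lemma mult_orth_sq_r x eta : A x -> orth ip A2 eta -> A eta -> mult x eta = 0.
Proof.
move=> ax oe ae; apply: (orth_dense_eq0 ip_inner A_dense) => y ay.
have sx := A_S ax.
by rewrite -(SK ax) -ip_multl //; apply/oe/sq_mult.
Qed.

Lemma mult_orth_sq_l xi eta : A xi -> orth ip A2 eta -> A eta -> mult eta xi = 0.
Proof.
move=> axi oe ae; have se := A_S ae; have exi := A_mult ae axi.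
apply: (ip_eq0 ip_inner).
by rewrite ip_multl // multA // (mult_orth_sq_r se) // mult0l // (ip0r ip_inner).
Qed.

Lemma mult_lim_sq w b : A w -> A b ->
  exists2 ps : nat -> H, (forall n, A2 (ps n)) & cvg (fun n => mult w (ps n)) (mult w b).
Proof.
move=> aw ab.
have [p [ps [hps cps]] obp] := projection ip_inner b (sq_subspace mult A) H_complete.
exists ps => //.
have hbps n : A (b - ps n) := subspaceB A_subspace ab (sq_subA (hps n)).
have cbps := cvgB ip_inner (cvg_cst ip_inner b) cps.
have := cvgB ip_inner (cvg_cst ip_inner (mult w b)) (pil_ext_orth_sq aw obp hbps cbps).
rewrite subr0; apply: eq_cvg => n; have aps := sq_subA (hps n).
by rewrite multBr // opprB addrC subrK.
Qed.

Lemma sq_dense x : cl A2 x -> cl (sq A2 mult) x.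
Proof.
set K := cl (sq A2 mult).
have K_sub : subspace K by apply/hclosure_subspace/sq_subspace.
have K_sum n (c : 'I_n -> R[i]) F : (forall i, K (F i)) -> K (\sum_(i < n) c i *: F i).
  exact: subspace_sum.
have K_A2A w b : A2 w -> A b -> K (mult w b).
  move=> sw ab; have [ps hps cps] := mult_lim_sq (sq_subA sw) ab.
  by exists (fun n => mult w (ps n)); split => // n; apply: sq_mult.
have K_AA u v : A u -> A v -> K (mult u v).
  move=> au av; have [ps hps cps] := mult_lim_sq au av.
  apply: (hclosure_idem ip_inner); exists (fun n => mult u (ps n)); split => // n.
  have [m [c [a [b [ha [hb ->]]]]]] := hps n.
  rewrite mult_sumr // => [|i]; last exact: A_mult (ha i) (hb i).
  by apply: K_sum => i; rewrite multA //; apply: K_A2A => //; apply: sq_mult.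
move=> [xs [hxs cxs]]; apply: (hclosure_idem ip_inner); exists xs; split => // n.
have [m [c [a [b [ha [hb ->]]]]]] := hxs n.
by apply: K_sum => i; apply: K_AA.
Qed.

End PseudoLeftHilbertAlgebra.

Theorem mainTheorem1 (R : realType) (H : lmodType R[i]) (ip : H -> H -> R[i])
    (A : H -> Prop) (mult : H -> H -> H) (S : H -> H) :
  inner_product ip -> hcomplete ip ->
  (forall x, hclosure ip A x) ->
  pseudo_left_Hilbert_algebra ip A mult S ->
  left_Hilbert_algebra ip (sq A mult) mult S /\
  (forall xi eta, A xi -> orth ip (sq A mult) eta ->
     pil_ext ip A mult xi eta 0 /\ (A eta -> mult eta xi = 0)).
Proof.
move=> ip_inner H_complete A_dense hA; split.
  split; first exact: sq_pseudo_left_Hilbert_algebra.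
  exact: (sq_dense ip_inner H_complete A_dense hA).
move=> xi eta axi oe; split.
  exact: (pil_ext_orth_sq ip_inner H_complete A_dense hA).
exact: (mult_orth_sq_l ip_inner A_dense hA).
Qed.
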